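(* Let $(p_j)_{j\ge 0}$ be a probability distribution on $\mathbb N$ with $0<p_0+p_1<1$, probability generating function $P(z)=\sum_{j\ge0}p_jz^j$ and mean $m=P'(1)<1$, and let $G(z)=\sum_{j\ge1}g_jz^j$ be the probability generating function of the Yaglom limit of the Galton–Watson process with offspring distribution $(p_j)$. If the power series $P(z)$ has radius of convergence $r_P>1$, then the power series $G(z)$ has radius of convergence $r_G>1$.
   Context: A Galton–Watson process $\{Z_n\}$ is the Markov chain on $\mathbb N$ with $Z_n=\sum_{i=1}^{Z_{n-1}}\theta_i^{(n)}$, the $\theta_i^{(n)}$ i.i.d. with law $(p_j)$, and $0$ absorbing. For $m<1$ the Yaglom limit is the unique probability distribution $(g_j)_{j\ge1}$ with $\lim_{n\to\infty}\mathbb P(Z_n=j\mid Z_n>0,Z_0=\ell)=g_j$ for all $\ell,j\ge1$; its generating function $G$ is the unique probability generating function with $G(0)=0$ and $G(P(z))=mG(z)+1-m$ for $z\in[0,1]$. *)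

From Stdlib Require Import Reals.
From Coquelicot Require Import Coquelicot.
Open Scope R_scope.

Definition conv (a b : nat -> R) (n : nat) : R :=
  sum_n (fun k => a k * b (n - k)%nat) n.

Fixpoint convpow (p : nat -> R) (i : nat) : nat -> R :=
  match i with
  | O => fun j => if Nat.eqb j 0 then 1 else 0
  | S i' => conv p (convpow p i')
  end.

(* One-step transition probabilities of the Galton-Watson chain:
   P(Z_n = j | Z_{n-1} = i) = p^{*i}(j)  (0 is absorbing since p^{*0} = delta_0). *)
Definition gw_trans (p : nat -> R) (i j : nat) : R := convpow p i j.

(* n-step transition probabilities  P(Z_n = j | Z_0 = l)
   (Chapman-Kolmogorov: sum over the state at time n-1). *)
Fixpoint gw_nstep (p : nat -> R) (n : nat) (l j : nat) : R :=
  match n with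
  | O => if Nat.eqb l j then 1 else 0
  | S n' => Series (fun i => gw_nstep p n' l i * gw_trans p i j)
  end.

(* P(Z_n = j | Z_n > 0, Z_0 = l) *)
Definition gw_cond (p : nat -> R) (n l j : nat) : R :=
  gw_nstep p n l j / (1 - gw_nstep p n l 0).

Definition prob_distr (p : nat -> R) : Prop :=
  (forall j, 0 <= p j) /\ is_series p 1.

Definition is_yaglom_limit (p g : nat -> R) : Prop :=
  prob_distr g /\ g 0%nat = 0 /\
  forall l j : nat, (1 <= l)%nat -> (1 <= j)%nat ->
    is_lim_seq (fun n => gw_cond p n l j) (g j).

(* The generating function of Z_n started from one individual is the n-th iterate P_n of P,
   so P(Z_n = j | Z_n > 0) z^j <= (P_n(z) - P_n(0)) / (1 - P_n(0)) for every z >= 0 in the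
   disc of convergence of P.  Since r_P > 1, there are rho > 1 and K with
   1 + m (x - 1) <= P(x) <= 1 + m (x - 1) + K (x - 1)^2 on [0, rho].  Take z = 1 + y with y
   small.  The survival probability a_n = 1 - P_n(0) satisfies a_n <= m^n and
   a_(n+1) >= a_n (m - K a_n), while b_n = P_n(z) - 1 satisfies b_n <= y ((1 + m) / 2)^n and
   b_(n+1) <= b_n (m + K b_n).  Hence b_(n+1) / a_(n+1) <= (b_n / a_n) (1 + C ((1 + m) / 2)^n),
   the ratios b_n / a_n stay bounded, g_j z^j is bounded, and r_G >= z > 1. *)

From Stdlib Require Import Reals Lra Lia.
From Coquelicot Require Import Coquelicot.
Open Scope R_scope.

Lemma is_lim_seq_sum_n (a : nat -> R) (l : R) : is_lim_seq (sum_n a) l <-> is_series a l.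
Proof. split; intro H; exact H. Qed.

Lemma sum_n_nonneg (a : nat -> R) N : (forall n, 0 <= a n) -> 0 <= sum_n a N.
Proof.
  intro Ha; induction N as [|N IH].
  - rewrite sum_O; auto.
  - rewrite sum_Sn; unfold plus; simpl; specialize (Ha (S N)); lra.
Qed.

Lemma sum_n_le_mono (a : nat -> R) M N :
  (forall n, 0 <= a n) -> (M <= N)%nat -> sum_n a M <= sum_n a N.
Proof.
  intros Ha HMN; induction HMN as [|N _ IH]; [lra|].
  rewrite sum_Sn; unfold plus; simpl; specialize (Ha (S N)); lra.
Qed.

Lemma sum_n_le_is_series (a : nat -> R) (l : R) N :
  (forall n, 0 <= a n) -> is_series a l -> sum_n a N <= l.
Proof.
  intros Ha Hl.
  assert (H : Rbar_le (sum_n a N) l).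
  { apply (is_lim_seq_le_loc (fun _ => sum_n a N) (sum_n a)); [| apply is_lim_seq_const | exact Hl].
    exists N; intros k Hk; apply sum_n_le_mono; auto. }
  exact H.
Qed.

Lemma is_series_le_sum_n_bound (a : nat -> R) (l : R) M :
  is_series a l -> (forall N, sum_n a N <= M) -> l <= M.
Proof.
  intros Hl HM.
  assert (H : Rbar_le l M) by exact (is_lim_seq_le _ _ l M HM Hl (is_lim_seq_const M)).
  exact H.
Qed.

Lemma is_series_le (a b : nat -> R) (la lb : R) :
  is_series a la -> is_series b lb -> (forall n, a n <= b n) -> la <= lb.
Proof.
  intros Ha Hb Hab.
  assert (H : Rbar_le la lb).
  { apply (is_lim_seq_le (sum_n a) (sum_n b)); auto.
    intro N; induction N as [|N IH]; rewrite ?sum_O, ?sum_Sn; auto.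
    unfold plus; simpl; specialize (Hab (S N)); lra. }
  exact H.
Qed.

Lemma is_series_nonneg (a : nat -> R) (l : R) : is_series a l -> (forall n, 0 <= a n) -> 0 <= l.
Proof.
  intros Hl Ha; apply Rle_trans with (sum_n a 0);
    [apply sum_n_nonneg | apply sum_n_le_is_series]; auto.
Qed.

Lemma is_series_ge_term (a : nat -> R) (l : R) n : (forall n, 0 <= a n) -> is_series a l -> a n <= l.
Proof.
  intros Ha Hl; apply Rle_trans with (sum_n a n); [| apply sum_n_le_is_series; auto].
  destruct n as [|n]; [rewrite sum_O; lra|].
  rewrite sum_Sn; unfold plus; simpl; pose proof (sum_n_nonneg a n Ha); lra.
Qed.

Lemma is_series_ge_term0_add (a : nat -> R) (l : R) n : (1 <= n)%nat ->
  (forall n, 0 <= a n) -> is_series a l -> a 0%nat + a n <= l.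
Proof.
  intros Hn Ha Hl; apply Rle_trans with (sum_n a n); [| apply sum_n_le_is_series; auto].
  destruct n as [|n]; [lia|].
  rewrite sum_Sn; unfold plus; simpl.
  pose proof (sum_n_le_mono a 0 n Ha (Nat.le_0_l n)); rewrite sum_O in *; lra.
Qed.

Lemma ex_series_sum_n_bounded (a : nat -> R) M :
  (forall n, 0 <= a n) -> (forall N, sum_n a N <= M) -> ex_series a.
Proof.
  intros Ha HM; destruct (ex_finite_lim_seq_incr (sum_n a) M) as [l Hl]; auto.
  - intro n; rewrite sum_Sn; unfold plus; simpl; specialize (Ha (S n)); lra.
  - exists l; exact Hl.
Qed.

(* For a divergent nonnegative series, [Series] returns the junk value [0]. *)
Lemma Series_nonneg (a : nat -> R) : (forall n, 0 <= a n) -> 0 <= Series a.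
Proof.
  intro Ha; unfold Series.
  assert (Hl : ex_lim_seq (sum_n a)).
  { apply ex_lim_seq_incr; intro n; rewrite sum_Sn; unfold plus; simpl; specialize (Ha (S n)); lra. }
  apply Lim_seq_correct in Hl.
  destruct (Lim_seq (sum_n a)) as [l| |]; simpl; try lra.
  assert (H : Rbar_le 0 l)
    by exact (is_lim_seq_le _ _ 0 l (fun N => sum_n_nonneg a N Ha) (is_lim_seq_const 0) Hl).
  exact H.
Qed.

Lemma is_series_lin_comb (a b : nat -> R) (la lb s t : R) :
  is_series a la -> is_series b lb -> is_series (fun n => s * a n + t * b n) (s * la + t * lb).
Proof.
  intros Ha Hb.
  exact (is_series_plus (K := R_AbsRing) (V := R_NormedModule) _ _ _ _
           (is_series_scal_l (K := R_AbsRing) (V := R_NormedModule) s _ _ Ha)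
           (is_series_scal_l (K := R_AbsRing) (V := R_NormedModule) t _ _ Hb)).
Qed.

Lemma is_series_sum_n (a : nat -> nat -> R) (A : nat -> R) N :
  (forall j, is_series (fun i => a i j) (A j)) ->
  is_series (fun i => sum_n (a i) N) (sum_n A N).
Proof.
  intro HA; induction N as [|N IH].
  - rewrite sum_O; apply is_series_ext with (fun i => a i 0%nat); auto.
    intro; rewrite sum_O; auto.
  - rewrite sum_Sn; apply is_series_ext with (fun i => plus (sum_n (a i) N) (a i (S N))).
    + intro; rewrite sum_Sn; auto.
    + exact (is_series_plus _ _ _ _ IH (HA (S N))).
Qed.

Lemma is_series_Series_swap (a : nat -> nat -> R) (A : nat -> R) L :
  (forall i j, 0 <= a i j) -> (forall i, is_series (a i) (A i)) -> is_series A L ->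
  (forall j, ex_series (fun i => a i j)) /\ is_series (fun j => Series (fun i => a i j)) L.
Proof.
  intros Ha HA HL.
  assert (Hcol : forall j, ex_series (fun i => a i j)).
  { intro j; apply (ex_series_le (K := R_AbsRing) (V := R_CompleteNormedModule)) with A;
      [| exists L; auto].
    intro i; change (norm (a i j)) with (Rabs (a i j)); rewrite Rabs_pos_eq by auto.
    apply is_series_ge_term; auto. }
  split; auto.
  set (v := fun j => Series (fun i => a i j)).
  assert (Hv : forall j, is_series (fun i => a i j) (v j)) by (intro; apply Series_correct; auto).
  assert (Hv_nonneg : forall j, 0 <= v j) by (intro j; exact (is_series_nonneg _ _ (Hv j) (fun i => Ha i j))).
  assert (Hv_bound : forall N, sum_n v N <= L).
  { intro N; apply (is_series_le _ _ _ _ (is_series_sum_n a v N Hv) HL).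
    intro i; apply sum_n_le_is_series; auto. }
  destruct (ex_series_sum_n_bounded v L Hv_nonneg Hv_bound) as [Lv HLv].
  assert (Lv <= L) by exact (is_series_le_sum_n_bound v Lv L HLv Hv_bound).
  assert (L <= Lv).
  { apply (is_series_le_sum_n_bound A L Lv HL); intro N.
    apply (is_series_le _ _ _ _ (is_series_sum_n (fun j i => a i j) A N HA) HLv).
    intro j; apply sum_n_le_is_series; auto. }
  replace L with Lv by lra; exact HLv.
Qed.

Lemma pow_ge_tangent (x : R) j : 0 <= x -> 1 + INR j * (x - 1) <= x ^ j.
Proof.
  intro Hx; induction j as [|j IH]; [simpl; lra|].
  rewrite S_INR; simpl; pose proof (pos_INR j).
  assert (x * (1 + INR j * (x - 1)) <= x * x ^ j) by (apply Rmult_le_compat_l; lra).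
  assert (0 <= INR j * (x - 1) ^ 2) by (apply Rmult_le_pos; [lra | apply pow2_ge_0]).
  nra.
Qed.

Lemma pow_le_tangent_add_sq (x r : R) j : 0 <= x <= r -> 1 <= r ->
  x ^ j <= 1 + INR j * (x - 1) + INR j ^ 2 * (x - 1) ^ 2 * r ^ j.
Proof.
  intros Hx Hr; induction j as [|j IH]; [simpl; lra|].
  rewrite S_INR; simpl; pose proof (pos_INR j).
  assert (Hrj : 1 <= r ^ j) by (rewrite <- (pow1 j); apply pow_incr; lra).
  assert (x * x ^ j <= x * (1 + INR j * (x - 1) + INR j ^ 2 * (x - 1) ^ 2 * r ^ j))
    by (apply Rmult_le_compat_l; lra).
  assert (0 <= INR j ^ 2 * (x - 1) ^ 2 * r ^ j * (r - x))
    by (apply Rmult_le_pos; [apply Rmult_le_pos; [apply Rmult_le_pos; apply pow2_ge_0 |] |]; lra).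
  assert (Hrj1 : 1 <= r * r ^ j) by nra.
  assert (0 <= (x - 1) ^ 2 * (INR j * (r * r ^ j - 1) + (INR j + 1) * (r * r ^ j)))
    by (apply Rmult_le_pos; [apply pow2_ge_0 | pose proof (Rmult_le_pos (INR j) (r * r ^ j - 1) ltac:(lra) ltac:(lra)); lra]).
  lra.
Qed.

Lemma pow_le_self (x : R) j : 0 <= x <= 1 -> (1 <= j)%nat -> x ^ j <= x.
Proof.
  intros Hx Hj; destruct j as [|j]; [lia|]; simpl.
  assert (x ^ j <= 1) by (rewrite <- (pow1 j); apply pow_incr; lra).
  nra.
Qed.

Lemma le_exp_of_geometric_growth (r : nat -> R) (C mu : R) :
  0 <= C -> 0 <= mu < 1 -> (forall n, 0 <= r n) ->
  (forall n, r (S n) <= r n * (1 + C * mu ^ n)) ->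
  forall n, r n <= r 0%nat * exp (C / (1 - mu)).
Proof.
  intros HC Hmu Hr Hstep.
  assert (Hpartial : forall n, r n <= r 0%nat * exp (C * (1 - mu ^ n) / (1 - mu))).
  { induction n as [|n IH].
    - replace (C * (1 - mu ^ 0) / (1 - mu)) with 0 by (simpl; field; lra).
      rewrite exp_0; lra.
    - replace (C * (1 - mu ^ S n) / (1 - mu)) with (C * (1 - mu ^ n) / (1 - mu) + C * mu ^ n)
        by (simpl; field; lra).
      rewrite exp_plus, <- Rmult_assoc.
      apply Rle_trans with (1 := Hstep n).
      pose proof (Rmult_le_pos _ _ HC (pow_le mu n ltac:(lra))).
      apply Rmult_le_compat; [apply Hr | lra | exact IH | apply exp_ineq1_le]. }
  intro n; apply Rle_trans with (1 := Hpartial n).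
  apply Rmult_le_compat_l; [apply Hr|].
  assert (Hle : C * (1 - mu ^ n) / (1 - mu) <= C / (1 - mu)).
  { unfold Rdiv; apply Rmult_le_compat_r; [left; apply Rinv_0_lt_compat; lra|].
    pose proof (Rmult_le_pos _ _ HC (pow_le mu n ltac:(lra))); lra. }
  destruct (Rle_lt_or_eq_dec _ _ Hle) as [Hlt | ->]; [left; apply exp_increasing|]; lra.
Qed.

Section ExtinctionIterates.

Variables (f : R -> R) (m K q d : R).
Hypothesis m_lt_1 : m < 1.
Hypothesis K_nonneg : 0 <= K.
Hypothesis q_lt_1 : q < 1.
Hypothesis d_pos : 0 < d.
Hypothesis f_ge_tangent : forall x, 0 <= x <= 1 + d -> 1 + m * (x - 1) <= f x.
Hypothesis f_le_tangent_add_sq :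
  forall x, 0 <= x <= 1 + d -> f x <= 1 + m * (x - 1) + K * (x - 1) ^ 2.
(* Only used to get [0 < m] and to keep [1 - f^n(0)] positive. *)
Hypothesis f_le_chord : forall x, 0 <= x <= 1 -> f x <= x + (1 - x) * q.

Lemma slope_pos : 0 < m.
Proof. pose proof (f_ge_tangent 0 ltac:(lra)); pose proof (f_le_chord 0 ltac:(lra)); lra. Qed.

Let survival n := 1 - Nat.iter n f 0.

Lemma survival_succ n : survival (S n) = 1 - f (1 - survival n).
Proof. unfold survival; simpl; do 2 f_equal; ring. Qed.

Lemma survival_bounds n : 0 < survival n <= m ^ n.
Proof.
  pose proof slope_pos.
  induction n as [|n IH]; [unfold survival; simpl; lra|].
  assert (m ^ n <= 1) by (rewrite <- (pow1 n); apply pow_incr; lra).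
  pose proof (f_ge_tangent (1 - survival n) ltac:(lra)).
  pose proof (f_le_chord (1 - survival n) ltac:(lra)).
  rewrite survival_succ; simpl; nra.
Qed.

Lemma survival_succ_ge n : survival n * (m - K * survival n) <= survival (S n).
Proof.
  pose proof slope_pos; pose proof (survival_bounds n).
  assert (m ^ n <= 1) by (rewrite <- (pow1 n); apply pow_incr; lra).
  pose proof (f_le_tangent_add_sq (1 - survival n) ltac:(lra)).
  rewrite survival_succ; nra.
Qed.

Section Overshoot.

Variable y : R.
Hypothesis y_pos : 0 < y <= d.
Hypothesis Ky_le : K * y <= (1 - m) / 2.

Let mu := (1 + m) / 2.
Let overshoot n := Nat.iter n f (1 + y) - 1.

Lemma overshoot_succ n : overshoot (S n) = f (1 + overshoot n) - 1.
Proof. unfold overshoot; simpl; do 2 f_equal; ring. Qed.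

Lemma overshoot_bounds n : 0 <= overshoot n <= y * mu ^ n.
Proof.
  pose proof slope_pos.
  induction n as [|n IH]; [unfold overshoot; simpl; lra|].
  assert (mu ^ n <= 1) by (rewrite <- (pow1 n); apply pow_incr; unfold mu; lra).
  pose proof (f_ge_tangent (1 + overshoot n) ltac:(nra)).
  pose proof (f_le_tangent_add_sq (1 + overshoot n) ltac:(nra)).
  assert (K * overshoot n <= K * y) by (apply Rmult_le_compat_l; nra).
  rewrite overshoot_succ; simpl; unfold mu in *; nra.
Qed.

Lemma overshoot_succ_le n : overshoot (S n) <= overshoot n * (m + K * overshoot n).
Proof.
  pose proof (overshoot_bounds n).
  assert (mu ^ n <= 1) by (rewrite <- (pow1 n); apply pow_incr; pose proof slope_pos; unfold mu; lra).
  pose proof (f_le_tangent_add_sq (1 + overshoot n) ltac:(nra)).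
  rewrite overshoot_succ; nra.
Qed.

Let ratio n := overshoot n / survival n.

(* The constant comes from [(m + K b) / (m - K a) <= 1 + 2 K (a + b) / m] once [K a <= m / 2],
   together with [a <= m ^ n <= mu ^ n] and [b <= y mu ^ n]. *)
Lemma ratio_succ_le n : K * survival n <= m / 2 ->
  ratio (S n) <= ratio n * (1 + 2 * K * (1 + y) / m * mu ^ n).
Proof.
  intro HKa; pose proof slope_pos.
  pose proof (survival_bounds n) as [Ha0 Ham]; pose proof (survival_bounds (S n)) as [Ha0' _].
  pose proof (survival_succ_ge n) as Ha'; pose proof (overshoot_succ_le n) as Hb'.
  pose proof (overshoot_bounds n) as [Hb0 Hby].
  set (a := survival n) in *; set (a' := survival (S n)) in *.
  set (b := overshoot n) in *; set (b' := overshoot (S n)) in *.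
  set (F := 1 + 2 * K * (1 + y) / m * mu ^ n).
  assert (Hmu : m ^ n <= mu ^ n) by (apply pow_incr; unfold mu; lra).
  assert (Hkey : m + K * b <= (m - K * a) * F).
  { assert (Hhalf : m / 2 * (2 * K * (1 + y) / m) = K * (1 + y)) by (field; lra).
    assert (0 <= 2 * K * (1 + y) / m * mu ^ n)
      by (apply Rmult_le_pos; [apply Rdiv_le_0_compat; nra | apply pow_le; unfold mu; lra]).
    assert (K * a <= K * mu ^ n) by (apply Rmult_le_compat_l; lra).
    assert (K * b <= K * (y * mu ^ n)) by (apply Rmult_le_compat_l; lra).
    unfold F; nra. }
  assert (Hcross : b' * a <= b * a' * F).
  { apply Rle_trans with (b * (m + K * b) * a); [apply Rmult_le_compat_r; lra|].
    apply Rle_trans with (b * (a * (m - K * a)) * F); [|apply Rmult_le_compat_r, Rmult_le_compat_l; nra].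
    replace (b * (a * (m - K * a)) * F) with (b * a * ((m - K * a) * F)) by ring.
    replace (b * (m + K * b) * a) with (b * a * (m + K * b)) by ring.
    apply Rmult_le_compat_l; nra. }
  unfold ratio; fold a a' b b'; fold F.
  replace (b / a * F) with (b * F / a) by (field; lra).
  apply Rle_div_l; [lra|].
  replace (b * F / a * a') with (b * a' * F / a) by (field; lra).
  apply Rle_div_r; lra.
Qed.

Lemma overshoot_le_survival :
  exists B N, forall n, (N <= n)%nat -> overshoot n <= B * survival n.
Proof.
  pose proof slope_pos.
  set (C := 2 * K * (1 + y) / m).
  assert (HC : 0 <= C) by (apply Rdiv_le_0_compat; nra).
  destruct (pow_lt_1_zero m ltac:(rewrite Rabs_pos_eq; lra) (m / (2 * (K + 1))))
    as [N HN]; [apply Rdiv_lt_0_compat; lra|].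
  assert (HKa : forall n, (N <= n)%nat -> K * survival n <= m / 2).
  { intros n Hn; specialize (HN n Hn); rewrite Rabs_pos_eq in HN by (apply pow_le; lra).
    pose proof (survival_bounds n).
    assert (Hmn : m ^ n * (2 * (K + 1)) <= m)
      by (apply Rle_div_r; lra).
    nra. }
  exists (ratio (N + 0) * exp (C / (1 - mu))), N; intros n Hn.
  assert (Hratio : forall k, 0 <= ratio (N + k)).
  { intro k; pose proof (survival_bounds (N + k)); pose proof (overshoot_bounds (N + k)).
    apply Rdiv_le_0_compat; lra. }
  pose proof (le_exp_of_geometric_growth (fun k => ratio (N + k)) C mu HC
                ltac:(unfold mu; lra) Hratio) as Hgrowth.
  replace n with (N + (n - N))%nat by lia.
  pose proof (survival_bounds (N + (n - N))).
  apply Rle_div_l; [lra|]; apply Hgrowth.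
  intro k; rewrite <- plus_n_Sm.
  apply Rle_trans with (1 := ratio_succ_le (N + k) (HKa (N + k)%nat ltac:(lia))).
  apply Rmult_le_compat_l; [apply Hratio|].
  assert (Hmuk : (mu ^ (N + k) <= mu ^ k)%R).
  { rewrite pow_add; assert (mu ^ N <= 1) by (rewrite <- (pow1 N); apply pow_incr; unfold mu; lra).
    pose proof (pow_le mu k ltac:(unfold mu; lra)); nra. }
  fold C; pose proof (Rmult_le_compat_l _ _ _ HC Hmuk); lra.
Qed.

End Overshoot.

Lemma iterates_overshoot_le_survival :
  exists z, 1 < z <= 1 + d /\ f z <= z /\
  exists B N, forall n, (N <= n)%nat ->
    0 < 1 - Nat.iter n f 0 /\
    Nat.iter n f z - Nat.iter n f 0 <= B * (1 - Nat.iter n f 0).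
Proof.
  pose proof slope_pos.
  set (y := Rmin d ((1 - m) / (2 * (K + 1)))).
  assert (Hy : 0 < y <= d)
    by (split; [apply Rmin_glb_lt; [lra | apply Rdiv_lt_0_compat; lra] | apply Rmin_l]).
  assert (HKy : K * y <= (1 - m) / 2).
  { assert (y * (2 * (K + 1)) <= 1 - m) by (apply Rle_div_r; [lra | apply Rmin_r]).
    nra. }
  exists (1 + y); split; [lra|]; split.
  { pose proof (overshoot_bounds y Hy HKy 1); simpl in *; nra. }
  destruct (overshoot_le_survival y Hy HKy) as [B [N HB]].
  exists (B + 1), N; intros n Hn.
  pose proof (survival_bounds n); specialize (HB n Hn); unfold survival in *; split; lra.
Qed.

End ExtinctionIterates.

Lemma ex_series_mul_pow (a : nat -> R) (r : R) :
  (forall j, 0 <= a j) -> 0 <= r -> Rbar_lt r (CV_radius a) -> ex_series (fun j => a j * r ^ j).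
Proof.
  intros Ha Hr Hrad.
  apply ex_series_ext with (fun j => Rabs (a j * r ^ j)).
  - intro j; apply Rabs_pos_eq, Rmult_le_pos; auto; apply pow_le; auto.
  - apply CV_disk_inside; rewrite Rabs_pos_eq; auto.
Qed.

Lemma ex_series_sq_mul_pow (a : nat -> R) (r : R) :
  (forall j, 0 <= a j) -> 0 <= r -> Rbar_lt r (CV_radius a) ->
  ex_series (fun j => INR j ^ 2 * a j * r ^ j).
Proof.
  intros Ha Hr Hrad.
  assert (Hd2 : ex_series (fun k => Rabs (PS_derive (PS_derive a) k * r ^ k))).
  { apply CV_disk_inside; rewrite Rabs_pos_eq, !CV_radius_derive; auto. }
  apply (ex_series_incr_n _ 2).
  apply (ex_series_le (K := R_AbsRing) (V := R_CompleteNormedModule))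
    with (fun k => 2 * r ^ 2 * Rabs (PS_derive (PS_derive a) k * r ^ k)).
  - intro k; change (norm ?t) with (Rabs t); unfold PS_derive.
    replace (S (S k)) with (2 + k)%nat by lia.
    rewrite pow_add, S_INR, plus_INR; simpl (INR 2).
    pose proof (pos_INR k); pose proof (pow2_ge_0 r).
    assert (Hu : 0 <= a (2 + k)%nat * r ^ k) by (apply Rmult_le_pos; auto; apply pow_le; lra).
    set (u := a (2 + k)%nat * r ^ k) in Hu.
    replace ((1 + 1 + INR k) ^ 2 * a (2 + k)%nat * (r ^ 2 * r ^ k))
      with ((INR k + 2) ^ 2 * r ^ 2 * u) by (unfold u; ring).
    replace ((INR k + 1) * ((1 + 1 + INR k) * a (2 + k)%nat) * r ^ k)
      with ((INR k + 1) * (INR k + 2) * u) by (unfold u; ring).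
    assert (0 <= INR k * (INR k + 2) * u * r ^ 2)
      by (apply Rmult_le_pos; [apply Rmult_le_pos; [apply Rmult_le_pos|]|]; lra).
    rewrite !Rabs_pos_eq; [nra | |].
    + apply Rmult_le_pos; [apply Rmult_le_pos|]; lra.
    + apply Rmult_le_pos; [apply Rmult_le_pos; [apply pow2_ge_0|]|]; lra.
  - destruct Hd2 as [l Hl]; exists (2 * r ^ 2 * l).
    exact (is_series_scal_l (K := R_AbsRing) (V := R_NormedModule) _ _ _ Hl).
Qed.

Lemma is_series_delta0 (c x : R) :
  is_series (fun j => (if Nat.eqb j 0 then c else 0) * x ^ j) c.
Proof.
  apply (proj1 (is_lim_seq_sum_n _ _)), is_lim_seq_ext with (fun _ => c); [| apply is_lim_seq_const].
  intro n; induction n as [|n IH].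
  - rewrite sum_O; simpl; ring.
  - rewrite sum_Sn, <- IH; unfold plus; simpl; ring.
Qed.

Lemma is_series_delta1 (x : R) :
  is_series (fun j => (if Nat.eqb 1 j then 1 else 0) * x ^ j) x.
Proof.
  apply (proj1 (is_lim_seq_sum_n _ _)), (is_lim_seq_incr_n _ 1), is_lim_seq_ext with (fun _ => x); [| apply is_lim_seq_const].
  intro n; rewrite Nat.add_1_r; induction n as [|n IH].
  - rewrite sum_Sn, sum_O; unfold plus; simpl; ring.
  - rewrite sum_Sn, <- IH; unfold plus; simpl; ring.
Qed.

Lemma is_series_pow0 (c : nat -> R) : is_series (fun j => c j * 0 ^ j) (c 0%nat).
Proof.
  eapply is_series_ext; [| apply (is_series_delta0 (c 0%nat) 0)].
  intros [|j]; simpl; ring.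
Qed.

Lemma conv_nonneg (a b : nat -> R) n :
  (forall k, 0 <= a k) -> (forall k, 0 <= b k) -> 0 <= conv a b n.
Proof. intros; apply sum_n_nonneg; intro; apply Rmult_le_pos; auto. Qed.

Lemma convpow_nonneg (p : nat -> R) i j : (forall k, 0 <= p k) -> 0 <= convpow p i j.
Proof.
  intro Hp; revert j; induction i as [|i IH]; intro j; simpl.
  - destruct (Nat.eqb j 0); lra.
  - apply conv_nonneg; auto.
Qed.

Lemma is_series_convpow (p : nat -> R) (x Px : R) :
  (forall j, 0 <= p j) -> 0 <= x -> is_series (fun j => p j * x ^ j) Px ->
  forall i, is_series (fun j => convpow p i j * x ^ j) (Px ^ i).
Proof.
  intros Hp Hx HP i; induction i as [|i IH]; [apply is_series_delta0|].
  eapply is_series_ext; [| apply (is_series_mult_pos _ _ _ _ HP IH)].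
  - intro n; simpl; unfold conv; rewrite sum_n_Reals, Rmult_comm, scal_sum.
    apply sum_eq; intros k Hk.
    replace (x ^ n) with (x ^ k * x ^ (n - k)) by (rewrite <- pow_add; f_equal; lia).
    ring.
  - intro; apply Rmult_le_pos; auto; apply pow_le; auto.
  - intro; apply Rmult_le_pos; [apply convpow_nonneg | apply pow_le]; auto.
Qed.

Lemma gw_nstep_nonneg (p : nat -> R) n l j : (forall k, 0 <= p k) -> 0 <= gw_nstep p n l j.
Proof.
  intro Hp; revert j; induction n as [|n IH]; intro j; simpl.
  - destruct (Nat.eqb l j); lra.
  - apply Series_nonneg; intro i; apply Rmult_le_pos; [| apply convpow_nonneg]; auto.
Qed.

Section GaltonWatsonGF.

Variables (p : nat -> R) (P : R -> R) (z : R).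
Hypothesis p_nonneg : forall j, 0 <= p j.
Hypothesis P_series : forall x, 0 <= x <= z -> is_series (fun j => p j * x ^ j) (P x).
Hypothesis P_maps : forall x, 0 <= x <= z -> 0 <= P x <= z.
Hypothesis z_nonneg : 0 <= z.

Lemma is_series_gw_nstep n x :
  0 <= x <= z -> is_series (fun j => gw_nstep p n 1 j * x ^ j) (Nat.iter n P x).
Proof.
  revert x; induction n as [|n IH]; intros x Hx; [apply is_series_delta1|].
  destruct (P_maps x Hx) as [HPx0 HPxz].
  destruct (is_series_Series_swap (fun i j => gw_nstep p n 1 i * convpow p i j * x ^ j)
              (fun i => gw_nstep p n 1 i * P x ^ i) (Nat.iter n P (P x))) as [_ Hswap].
  - intros i j; apply Rmult_le_pos; [apply Rmult_le_pos|];
      [apply gw_nstep_nonneg | apply convpow_nonneg | apply pow_le; lra]; auto.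
  - intro i; eapply is_series_ext;
      [| apply (is_series_scal_l (K := R_AbsRing) (V := R_NormedModule) (gw_nstep p n 1 i)),
           (is_series_convpow p x (P x)); auto; lra].
    intro j; unfold scal; simpl; unfold mult; simpl; ring.
  - apply IH; lra.
  - rewrite Nat.iter_swap in Hswap; eapply is_series_ext; [| exact Hswap].
    intro j; simpl; unfold gw_trans; rewrite <- Series_scal_r.
    apply Series_ext; intro; ring.
Qed.

Lemma gw_cond_mul_pow_le n j B : (1 <= j)%nat ->
  0 < 1 - Nat.iter n P 0 ->
  Nat.iter n P z - Nat.iter n P 0 <= B * (1 - Nat.iter n P 0) ->
  gw_cond p n 1 j * z ^ j <= B.
Proof.
  intros Hj Hsurv HB.
  assert (Hext : gw_nstep p n 1 0 = Nat.iter n P 0).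
  { rewrite <- (is_series_unique _ _ (is_series_gw_nstep n 0 ltac:(lra))).
    symmetry; apply is_series_unique, is_series_pow0. }
  assert (Hterm := is_series_ge_term0_add _ _ j Hj
                     (fun i => Rmult_le_pos _ _ (gw_nstep_nonneg p n 1 i p_nonneg) (pow_le z i z_nonneg))
                     (is_series_gw_nstep n z ltac:(lra))).
  simpl in Hterm; rewrite Hext in Hterm.
  replace (gw_cond p n 1 j * z ^ j) with (gw_nstep p n 1 j * z ^ j / (1 - Nat.iter n P 0))
    by (unfold gw_cond; rewrite Hext; field; lra).
  apply Rle_div_l; lra.
Qed.

Lemma yaglom_mul_pow_le (g : nat -> R) B N :
  (forall j, (1 <= j)%nat -> is_lim_seq (fun n => gw_cond p n 1 j) (g j)) ->
  (forall n, (N <= n)%nat -> 0 < 1 - Nat.iter n P 0 /\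
     Nat.iter n P z - Nat.iter n P 0 <= B * (1 - Nat.iter n P 0)) ->
  forall j, (1 <= j)%nat -> g j * z ^ j <= B.
Proof.
  intros Hlim HB j Hj.
  assert (H : Rbar_le (g j * z ^ j) B).
  { apply (is_lim_seq_le_loc (fun n => gw_cond p n 1 j * z ^ j) (fun _ => B)).
    - exists N; intros n Hn; destruct (HB n Hn); apply gw_cond_mul_pow_le; auto.
    - apply (is_lim_seq_scal_r _ (z ^ j) (g j)), Hlim, Hj.
    - apply is_lim_seq_const. }
  exact H.
Qed.

End GaltonWatsonGF.

Definition pgf (p : nat -> R) (x : R) : R := Series (fun j => p j * x ^ j).

Section PgfBounds.

Variables (p : nat -> R) (m K rho : R).
Hypothesis p_nonneg : forall j, 0 <= p j.
Hypothesis p_sum : is_series p 1.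
Hypothesis p_mean : is_series (fun j => INR j * p j) m.
Hypothesis m_lt_1 : m < 1.
Hypothesis p0_lt_1 : p 0%nat < 1.
Hypothesis rho_gt_1 : 1 < rho.
Hypothesis p_rho : ex_series (fun j => p j * rho ^ j).
Hypothesis K_series : is_series (fun j => INR j ^ 2 * p j * rho ^ j) K.

Lemma is_series_pgf x : 0 <= x <= rho -> is_series (fun j => p j * x ^ j) (pgf p x).
Proof.
  intro Hx; apply Series_correct.
  apply (ex_series_le (K := R_AbsRing) (V := R_CompleteNormedModule)) with (fun j => p j * rho ^ j); auto.
  intro j; change (norm ?t) with (Rabs t).
  rewrite Rabs_pos_eq by (apply Rmult_le_pos; auto; apply pow_le; lra).
  apply Rmult_le_compat_l; auto; apply pow_incr; lra.
Qed.

Lemma pgf_nonneg x : 0 <= x <= rho -> 0 <= pgf p x.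
Proof.
  intro Hx; apply (is_series_nonneg _ _ (is_series_pgf x Hx)).
  intro j; apply Rmult_le_pos; auto; apply pow_le; lra.
Qed.

Lemma pgf_le_mono x y : 0 <= x <= y -> y <= rho -> pgf p x <= pgf p y.
Proof.
  intros Hxy Hy; apply (is_series_le _ _ _ _ (is_series_pgf x ltac:(lra)) (is_series_pgf y ltac:(lra))).
  intro j; apply Rmult_le_compat_l; auto; apply pow_incr; lra.
Qed.

Lemma pgf_ge_tangent x : 0 <= x <= rho -> 1 + m * (x - 1) <= pgf p x.
Proof.
  intro Hx; replace (1 + m * (x - 1)) with (1 * 1 + (x - 1) * m) by ring.
  apply (is_series_le _ _ _ _ (is_series_lin_comb _ _ _ _ 1 (x - 1) p_sum p_mean)
                    (is_series_pgf x Hx)).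
  intro j; pose proof (pow_ge_tangent x j ltac:(lra)); specialize (p_nonneg j); nra.
Qed.

Lemma pgf_le_tangent_add_sq x : 0 <= x <= rho -> pgf p x <= 1 + m * (x - 1) + K * (x - 1) ^ 2.
Proof.
  intro Hx; replace (1 + m * (x - 1) + K * (x - 1) ^ 2)
    with (1 * (1 * 1 + (x - 1) * m) + (x - 1) ^ 2 * K) by ring.
  apply (is_series_le _ _ _ _ (is_series_pgf x Hx)
     (is_series_lin_comb _ _ _ _ 1 ((x - 1) ^ 2) (is_series_lin_comb _ _ _ _ 1 (x - 1) p_sum p_mean) K_series)).
  intro j; pose proof (pow_le_tangent_add_sq x rho j Hx ltac:(lra)); specialize (p_nonneg j); nra.
Qed.

Lemma pgf_le_chord x : 0 <= x <= 1 -> pgf p x <= x + (1 - x) * p 0%nat.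
Proof.
  intro Hx; replace (x + (1 - x) * p 0%nat) with (x * 1 + (1 - x) * p 0%nat) by ring.
  apply (is_series_le _ _ _ _ (is_series_pgf x ltac:(lra))
     (is_series_lin_comb _ _ _ _ x (1 - x) p_sum (is_series_delta0 (p 0%nat) 1))).
  intros [|j]; simpl; [lra|].
  pose proof (pow_le_self x (S j) Hx ltac:(lia)); specialize (p_nonneg (S j)); simpl in *; nra.
Qed.

Lemma pgf_iterates_overshoot_le_survival :
  exists z, 1 < z <= rho /\ (forall x, 0 <= x <= z -> 0 <= pgf p x <= z) /\
  exists B N, forall n, (N <= n)%nat ->
    0 < 1 - Nat.iter n (pgf p) 0 /\
    Nat.iter n (pgf p) z - Nat.iter n (pgf p) 0 <= B * (1 - Nat.iter n (pgf p) 0).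
Proof.
  assert (K_nonneg : 0 <= K).
  { apply (is_series_nonneg _ _ K_series); intro j.
    apply Rmult_le_pos; [apply Rmult_le_pos; [apply pow2_ge_0 | auto] | apply pow_le; lra]. }
  destruct (iterates_overshoot_le_survival (pgf p) m K (p 0%nat) (rho - 1) m_lt_1 K_nonneg p0_lt_1
              ltac:(lra)) as [z [Hz [Hfz HB]]].
  - intros x Hx; apply pgf_ge_tangent; lra.
  - intros x Hx; apply pgf_le_tangent_add_sq; lra.
  - intros x Hx; apply pgf_le_chord; lra.
  - exists z; split; [lra|]; split; auto.
    intros x Hx; split; [apply pgf_nonneg; lra|].
    apply Rle_trans with (pgf p z); auto; apply pgf_le_mono; lra.
Qed.

End PgfBounds.

Theorem theorem2p3 (p g : nat -> R) (m : R) :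
  prob_distr p ->
  0 < p 0%nat + p 1%nat < 1 ->
  is_series (fun j => INR j * p j) m ->
  m < 1 ->
  is_yaglom_limit p g ->
  Rbar_lt (Finite 1) (CV_radius p) ->
  Rbar_lt (Finite 1) (CV_radius g).
Proof.
  intros [p_nonneg p_sum] Hp01 p_mean m_lt_1 [[g_nonneg _] [g0 g_lim]] Hrad.
  assert (Hrho : exists rho, 1 < rho /\ Rbar_lt rho (CV_radius p)).
  { destruct (CV_radius p) as [r| |]; simpl in Hrad; [exists ((1 + r) / 2) | exists 2 |];
      simpl; tauto || lra. }
  destruct Hrho as [rho [rho_gt_1 Hrho]].
  pose proof (ex_series_mul_pow p rho p_nonneg ltac:(lra) Hrho) as p_rho.
  destruct (ex_series_sq_mul_pow p rho p_nonneg ltac:(lra) Hrho) as [K K_series].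
  destruct (pgf_iterates_overshoot_le_survival p m K rho) as [z [Hz [P_maps [B [N HB]]]]]; auto.
  { pose proof (p_nonneg 1%nat); lra. }
  apply Rbar_lt_le_trans with z; [simpl; lra|].
  apply CV_radius_bounded; exists (Rmax B 0); intros [|j].
  - rewrite g0, Rmult_0_l, Rabs_R0; apply Rmax_r.
  - rewrite Rabs_pos_eq.
    + apply Rle_trans with B; [|apply Rmax_l].
      apply yaglom_mul_pow_le with (p := p) (P := pgf p) (N := N); auto; try lra; [|lia].
      intros x Hx; apply (is_series_pgf p rho); auto; lra.
    + apply Rmult_le_pos; auto; apply pow_le; lra.
Qed.
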